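(* For all integers $a,d\ge1$, the distributive lattice $J(P_{a,1,1,d})$ is tCDE with edge density $\mathbb{E}(\mathrm{uni}_{J(P_{a,1,1,d})};\mathrm{ddeg})=1$.
   Context: $P_{a,1,1,d}$ is the poset on elements $w_1,\ldots,w_a,x_1,y_1,z_1,\ldots,z_d$ whose cover relations are $w_1\lessdot w_2\lessdot\cdots\lessdot w_a$, $w_a\lessdot x_1$, $w_a\lessdot y_1$, $x_1\lessdot z_1$, $y_1\lessdot z_1$, $z_1\lessdot z_2\lessdot\cdots\lessdot z_d$. $J(P)$ is the lattice of order ideals of $P$ ordered by inclusion; $\mathrm{ddeg}$ is the number of covered elements; $\mathrm{uni}$ is uniform. $\mathcal{T}^+_p(I)=1$ iff $p\notin I$ and $p$ is minimal in $P\setminus I$; $\mathcal{T}^-_p(I)=1$ iff $p\in I$ and $p$ is maximal in $I$ (else $0$). $\mu$ on $J(P)$ is toggle-symmetric if $\mathbb{E}(\mu;\mathcal{T}^+_p)=\mathbb{E}(\mu;\mathcal{T}^-_p)$ for all $p$; $J(P)$ is tCDE if $\mathbb{E}(\mu;\mathrm{ddeg})=\mathbb{E}(\mathrm{uni}_{J(P)};\mathrm{ddeg})$ for every toggle-symmetric $\mu$. *)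

From HB Require Import structures.
From mathcomp Require Import all_boot all_order all_algebra.
Set Implicit Arguments. Unset Strict Implicit. Unset Printing Implicit Defensive.
Import Order.TTheory GRing.Theory Num.Theory.

(* The poset P_{a,1,1,d}: elements are indices 0 .. a+d+1 of 'I_(a+d+2):
     w_k  (1 <= k <= a)  is index k-1,
     x_1                 is index a,
     y_1                 is index a+1,
     z_k  (1 <= k <= d)  is index a+1+k.                                   *)
Definition Pelt (a d : nat) := 'I_(a + d + 2).

Definition Pcover (a d : nat) : rel (Pelt a d) := fun u v =>
  [|| (u.+1 == v) && (v <= a)%N          (* w_k <. w_{k+1}, w_a <. x_1 *)
    , (u.+1 == a) && (v == a.+1 :> nat)   (* w_a <. y_1 *)
    , (u == a :> nat) && (v == a.+2 :> nat)   (* x_1 <. z_1 *)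
    , (u == a.+1 :> nat) && (v == a.+2 :> nat) (* y_1 <. z_1 *)
    | (a.+2 <= u)%N && (v == u.+1 :> nat) ].  (* z_k <. z_{k+1} *)

Definition Ple (a d : nat) : rel (Pelt a d) := connect (@Pcover a d).

Section Lattice.
Variables (T : finType) (le : rel T).

Definition is_ideal (I : {set T}) : bool :=
  [forall u, forall v, le u v ==> (v \in I) ==> (u \in I)].

(* J covers K in J(P) (i.e. K <. J) *)
Definition Jcovers (J K : {set T}) : bool :=
  [&& is_ideal K, K \proper J &
      ~~ [exists L : {set T}, [&& is_ideal L, K \proper L & L \proper J]]].

Definition ddeg (J : {set T}) : nat := #|[set K : {set T} | Jcovers J K]|.

Definition Tplus (p : T) (I : {set T}) : bool :=
  (p \notin I) && [forall q, (le q p && (q != p)) ==> (q \in I)].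
Definition Tminus (p : T) (I : {set T}) : bool :=
  (p \in I) && [forall q, (le p q && (q != p)) ==> (q \notin I)].

Variable R : realFieldType.
Local Open Scope ring_scope.

(* probability distributions on J(P), represented as functions on {set T}
   vanishing outside the order ideals *)
Definition is_distribution (mu : {set T} -> R) : Prop :=
  [/\ forall I, 0 <= mu I,
      forall I, ~~ is_ideal I -> mu I = 0 &
      \sum_(I : {set T} | is_ideal I) mu I = 1].

Definition expect (mu : {set T} -> R) (f : {set T} -> R) : R :=
  \sum_(I : {set T} | is_ideal I) mu I * f I.

Definition uni (I : {set T}) : R :=
  if is_ideal I then (#|[set J : {set T} | is_ideal J]|%:R)^-1 else 0.

Definition toggle_symmetric (mu : {set T} -> R) : Prop :=
  forall p, expect mu (fun I => (Tplus p I)%:R) = expect mu (fun I => (Tminus p I)%:R).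

Definition tCDE : Prop :=
  forall mu, is_distribution mu -> toggle_symmetric mu ->
    expect mu (fun I => (ddeg I)%:R) = expect uni (fun I => (ddeg I)%:R).

Definition edge_density : R := expect uni (fun I => (ddeg I)%:R).
End Lattice.

From HB Require Import structures.
From mathcomp Require Import all_boot all_order all_algebra.
From mathcomp Require Import zify lra.
Set Implicit Arguments. Unset Strict Implicit. Unset Printing Implicit Defensive.
Import Order.TTheory GRing.Theory Num.Theory.

(* An order ideal of P_{a,1,1,d} is either an initial segment of the linear
   extension w_1 < ... < w_a < x_1 < y_1 < z_1 < ... < z_d or {w_1, ..., w_a, y_1},
   so its lower covers (its maximal elements) and upper covers are explicit.
   Checking these ideals one by one gives, as statistics on J(P),
     ddeg = 1 + sum_p c_p (T^+_p - T^-_p),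
   with c_p = -1 on the w_i, -1/2 on x_1 and y_1, and 0 on the z_i.  Under a
   toggle-symmetric distribution each T^+_p - T^-_p has expectation 0, so ddeg
   has expectation 1; the uniform distribution is toggle-symmetric because
   adding p is a bijection from the ideals where p can be added onto those where
   p can be removed. *)

Lemma sum_ord_mem (V : nmodType) (m : nat) (g : nat -> V) (s : seq nat) : uniq s ->
  (\sum_(i < m | (i : nat) \in s) g i = \sum_(j <- s | (j < m)%N) g j)%R.
Proof.
move=> s_uniq; rewrite -(big_mkord (fun i => i \in s)) -big_filter -[RHS]big_filter.
apply/perm_big/uniq_perm; rewrite ?filter_uniq ?iota_uniq // => j.
by rewrite !mem_filter mem_index_iota andbC.
Qed.

Section OrderIdeals.
Variables (T : finType) (le : rel T).

Lemma idealP (I : {set T}) :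
  reflect (forall u v, le u v -> v \in I -> u \in I) (is_ideal le I).
Proof.
apply: (iffP forallP) => [h u v | h u].
  by move: (h u) => /forallP /(_ v) /implyP H /H /implyP.
by apply/forallP => v; apply/implyP => /h H; apply/implyP.
Qed.

Lemma TplusP (p : T) (I : {set T}) :
  reflect (p \notin I /\ forall q, le q p -> q != p -> q \in I) (Tplus le p I).
Proof.
apply: (iffP andP) => [[pI /forallP h]|[pI h]]; split => //.
  by move=> q qp nqp; move: (h q); rewrite qp nqp.
by apply/forallP => q; apply/implyP => /andP [qp nqp]; apply: h.
Qed.

Lemma TminusP (p : T) (I : {set T}) :
  reflect (p \in I /\ forall q, le p q -> q != p -> q \notin I) (Tminus le p I).
Proof.
apply: (iffP andP) => [[pI /forallP h]|[pI h]]; split => //.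
  by move=> q pq nqp; move: (h q); rewrite pq nqp.
by apply/forallP => q; apply/implyP => /andP [pq nqp]; apply: h.
Qed.

Lemma ideal0 : is_ideal le set0.
Proof. by apply/idealP => u v _; rewrite inE. Qed.

Lemma ideal_setD1_Tminus (I : {set T}) p : is_ideal le I -> Tminus le p I ->
  is_ideal le (I :\ p) /\ Tplus le p (I :\ p).
Proof.
move=> /idealP hI /TminusP [pI hp]; split.
  apply/idealP => u v uv; rewrite !inE => /andP [vp vI]; rewrite (hI u v uv vI) andbT.
  by apply/eqP => up; subst u; move: (hp v uv vp); rewrite vI.
apply/TplusP; split; first by rewrite !inE eqxx.
by move=> q qp nqp; rewrite !inE nqp (hI q p qp pI).
Qed.

Lemma ideal_setU1_Tplus (I : {set T}) p : is_ideal le I -> Tplus le p I ->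
  is_ideal le (p |: I) /\ Tminus le p (p |: I).
Proof.
move=> /idealP hI /TplusP [pI hp]; split.
  apply/idealP => u v uv; rewrite !inE => /orP [/eqP vp|vI]; last by rewrite (hI u v uv vI) orbT.
  by subst v; case: eqP => //= /eqP up; apply: hp.
apply/TminusP; split; first by rewrite !inE eqxx.
by move=> q pq nqp; rewrite !inE (negbTE nqp) /=; apply: contraNN pI => /(hI p q pq).
Qed.

Lemma Jcovers_setD1 (I : {set T}) p : is_ideal le I -> Tminus le p I ->
  Jcovers le I (I :\ p).
Proof.
move=> hI hp; have [hIp _] := ideal_setD1_Tminus hI hp.
case/TminusP: hp => pI _; rewrite /Jcovers hIp properD1 //=.
apply/existsP => -[L /and3P [_ /proper_card lt1 /proper_card lt2]].
by move: lt2; rewrite (cardsD1 p I) pI add1n ltnS leqNgt lt1.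
Qed.

Lemma card_ideals_Tplus_Tminus p :
  #|[set I | is_ideal le I && Tplus le p I]| = #|[set I | is_ideal le I && Tminus le p I]|.
Proof.
have -> : [set I | is_ideal le I && Tminus le p I] =
          (fun I => p |: I) @: [set I | is_ideal le I && Tplus le p I].
  apply/setP => K; rewrite inE; apply/idP/imsetP => [/andP [hK hp]|[I]].
    have [hKp hpK] := ideal_setD1_Tminus hK hp.
    by exists (K :\ p); [rewrite inE hKp | case/TminusP: hp => pK _; rewrite setD1K].
  by rewrite inE => /andP [hI hp] ->; have [-> ->] := ideal_setU1_Tplus hI hp.
apply/esym/card_in_imset => I J; rewrite !inE.
move=> /andP [_ /TplusP [pI _]] /andP [_ /TplusP [pJ _]] eqIJ.
by rewrite -(setU1K pI) eqIJ setU1K.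
Qed.

Variable R : realFieldType.
Local Open Scope ring_scope.

Lemma sum_indicator (c : T -> R) (P : pred T) :
  \sum_p c p * (P p)%:R = \sum_(p | P p) c p.
Proof. by rewrite [RHS]big_mkcond; apply: eq_bigr => p _; case: (P p); rewrite ?mulr1 ?mulr0. Qed.

Lemma uni_distribution : is_distribution le (uni le R).
Proof.
have ideals_gt0 : (0 < #|[set J | is_ideal le J]|)%N.
  by apply/card_gt0P; exists set0; rewrite inE ideal0.
split=> [I | I /negbTE nI | ]; rewrite /uni ?nI //.
  by case: ifP; rewrite ?invr_ge0.
rewrite (eq_bigr (fun=> #|[set J | is_ideal le J]|%:R^-1)) => [|I ->] //.
rewrite (eq_bigl (fun I => I \in [set J | is_ideal le J])); last by move=> I; rewrite inE.
rewrite sumr_const -[RHS](mulVf (x := #|[set J | is_ideal le J]|%:R)) ?mulr_natr //.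
by rewrite pnatr_eq0 -lt0n.
Qed.

Lemma expect_uni_indicator (P : pred {set T}) :
  expect le (uni le R) (fun I => (P I)%:R) =
  #|[set J | is_ideal le J]|%:R^-1 * #|[set I | is_ideal le I && P I]|%:R.
Proof.
rewrite /expect -[#|[set I | is_ideal le I && P I]|]sum1_card natr_sum mulr_sumr.
rewrite big_mkcond [RHS]big_mkcond /=.
apply: eq_bigr => I _; rewrite /uni inE.
by case: (is_ideal le I); case: (P I); rewrite ?mulr1 ?mulr0.
Qed.

Lemma uni_toggle_symmetric : toggle_symmetric le (uni le R).
Proof. by move=> p; rewrite !expect_uni_indicator card_ideals_Tplus_Tminus. Qed.

Section ToggleDecomposition.
Variables (c : T -> R) (e : R).
Hypothesis ddeg_decomposition : forall I, is_ideal le I ->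
  (ddeg le I)%:R = e + \sum_p c p * ((Tplus le p I)%:R - (Tminus le p I)%:R).

Lemma expect_ddeg_toggle_symmetric mu : is_distribution le mu -> toggle_symmetric le mu ->
  expect le mu (fun I => (ddeg le I)%:R) = e.
Proof.
case=> _ _ mu1 mu_sym; rewrite /expect.
have expand I : is_ideal le I -> mu I * (ddeg le I)%:R =
    e * mu I + \sum_p c p * (mu I * (Tplus le p I)%:R - mu I * (Tminus le p I)%:R).
  move/ddeg_decomposition ->; rewrite mulrDr mulr_sumr mulrC.
  by congr (_ + _); apply: eq_bigr => p _; rewrite mulrCA mulrBr.
rewrite (eq_bigr _ expand) big_split /= -mulr_sumr mu1 mulr1 exchange_big /= big1 ?addr0 // => p _.
by rewrite -mulr_sumr sumrB; move: (mu_sym p); rewrite /expect => ->; rewrite subrr mulr0.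
Qed.

Lemma tCDE_toggle_decomposition : tCDE le R /\ edge_density le R = e.
Proof.
have uni_e := expect_ddeg_toggle_symmetric uni_distribution uni_toggle_symmetric.
by split=> [mu mu_dist mu_sym|]; rewrite ?uni_e ?expect_ddeg_toggle_symmetric.
Qed.
End ToggleDecomposition.

Section Ranked.
Variable rank : T -> nat.
Hypothesis le_rank : forall u v, le u v -> u != v -> (rank u < rank v)%N.

Lemma Jcovers_Tminus (I K : {set T}) : is_ideal le I -> Jcovers le I K ->
  exists2 p, Tminus le p I & K = I :\ p.
Proof.
move=> /idealP hI /and3P [/idealP hK KI noL].
have [_ [x xI xK]] := properP KI.
have xIK : x \in I :\: K by rewrite inE xK xI.
have [p /setDP [pI pK] pmin] := arg_minnP rank xIK.
have pKI : is_ideal le (p |: K).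
  apply/idealP => u v uv; rewrite !inE => /orP [/eqP vp|vK]; last first.
    by rewrite (hK u v uv vK) orbT.
  subst v; case: (eqVneq u p) => //= up; apply: contraT => uK.
  have : u \in I :\: K by rewrite inE uK (hI u p uv pI).
  by move/pmin; rewrite leqNgt le_rank.
have eqI : p |: K = I.
  apply/eqP; rewrite eqEproper subUset sub1set pI (proper_sub KI) /=.
  apply: contra noL => pKI_I; apply/existsP; exists (p |: K).
  by rewrite pKI pKI_I properUr // sub1set.
exists p; last by rewrite -eqI setU1K.
apply/TminusP; split => // q pq nqp; rewrite -eqI !inE (negbTE nqp) /=.
by apply: contraNN pK => /(hK p q pq).
Qed.

Lemma ddeg_Tminus (I : {set T}) : is_ideal le I -> ddeg le I = #|[set p | Tminus le p I]|.
Proof.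
move=> hI; rewrite /ddeg.
have -> : [set K | Jcovers le I K] = (fun p => I :\ p) @: [set p | Tminus le p I].
  apply/setP => K; rewrite inE; apply/idP/imsetP => [/(Jcovers_Tminus hI) [p hp ->]|[p]].
    by exists p; rewrite ?inE.
  by rewrite inE => hp ->; apply: Jcovers_setD1.
apply: card_in_imset => p q; rewrite !inE => /TminusP [pI _] /TminusP [qI _] eqIpq.
by apply/eqP; apply: contraT => pq; have := setD11 p I; rewrite eqIpq !inE (negbTE pq) pI.
Qed.

Lemma ddeg_toggle_decomposition (c : T -> R) (e : R) (I : {set T}) : is_ideal le I ->
  \sum_(p | Tminus le p I) (1 + c p) = e + \sum_(p | Tplus le p I) c p ->
  (ddeg le I)%:R = e + \sum_p c p * ((Tplus le p I)%:R - (Tminus le p I)%:R).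
Proof.
move=> hI balance.
have -> : (ddeg le I)%:R = \sum_(p | Tminus le p I) 1 :> R.
  by rewrite ddeg_Tminus // -sum1_card natr_sum; apply: eq_bigl => p; rewrite inE.
under [in RHS]eq_bigr do rewrite mulrBr.
by rewrite sumrB !sum_indicator addrA -balance big_split /= addrK.
Qed.
End Ranked.
End OrderIdeals.

Section PosetPa11d.
Variables a d : nat.
Local Notation T := (Pelt a d).
Local Notation le := (@Ple a d).
Local Notation n := (a + d + 2).

(* P_{a,1,1,d} is the chain of indices with the single relation x_1 < y_1 removed. *)
Definition Ple_nat (u v : nat) : bool :=
  (u == v) || ((u < v) && ~~ ((u == a) && (v == a.+1))).

Lemma Ple_Ple_nat (u v : T) : le u v -> Ple_nat u v.
Proof.
case/connectP => p + ->; elim: p u => [|w p IHp] u /=; first by rewrite /Ple_nat eqxx.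
case/andP => + /IHp; rewrite /Pcover /Ple_nat.
move: (nat_of_ord u) (nat_of_ord w) (nat_of_ord (last w p)) => x y z; lia.
Qed.

Lemma Ple_succ (u v : T) : v = u.+1 :> nat -> u != a :> nat -> le u v.
Proof. by move=> vu ua; apply: connect1; rewrite /Pcover; lia. Qed.

Lemma Ple_chain k (u v : T) : v = u + k :> nat -> ~~ ((u <= a) && (a < v)) -> le u v.
Proof.
elim: k v => [|k IHk] v vuk uav.
  by rewrite addn0 in vuk; rewrite (val_inj vuk) /Ple connect0.
have w_lt : u + k < n by have := ltn_ord v; lia.
apply: (connect_trans (IHk (Ordinal w_lt) erefl _)); first by rewrite /=; lia.
by apply: Ple_succ => /=; lia.
Qed.

Lemma Ple_nat_Ple (u v : T) : Ple_nat u v -> le u v.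
Proof.
rewrite /Ple_nat => uv; have v_lt := ltn_ord v.
have [uav|] := boolP ((u <= a) && (a < v)); last first.
  by apply: (Ple_chain (k := v - u)); lia.
have a_lt : a < n by lia.
have [va|va] := eqVneq (v : nat) a.+1.
  have a1_lt : a.-1 < n by lia.
  apply: (connect_trans (y := Ordinal a1_lt)).
    by apply: (Ple_chain (k := a.-1 - u)) => /=; lia.
  by apply: connect1; rewrite /Pcover /=; lia.
have a2_lt : a.+2 < n by lia.
apply: (connect_trans (y := Ordinal a_lt)); first by apply: (Ple_chain (k := a - u)) => /=; lia.
apply: (connect_trans (y := Ordinal a2_lt)); first by apply: connect1; rewrite /Pcover /=; lia.
by apply: (Ple_chain (k := v - a.+2)) => /=; lia.
Qed.

Lemma PleE (u v : T) : le u v = Ple_nat u v.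
Proof. by apply/idP/idP; [apply: Ple_Ple_nat | apply: Ple_nat_Ple]. Qed.

Lemma Ple_lt (u v : T) : le u v -> u != v -> u < v.
Proof. by rewrite PleE /Ple_nat -val_eqE /=; lia. Qed.

Definition initial k : {set T} := [set i : T | i < k].
Definition ideal_y : {set T} := [set i : T | (i < a) || (i == a.+1 :> nat)].

Lemma ideal_classification (I : {set T}) : is_ideal le I ->
  I = ideal_y \/ exists2 k, k <= n & I = initial k.
Proof.
move=> /idealP hI.
have [/existsP [i0 i0I]|/existsPn allI] := boolP [exists i, i \notin I]; last first.
  right; exists n => //; apply/setP => i.
  by rewrite !inE ltn_ord; move: (allI i); rewrite negbK.
have [k kI kmin] := @arg_minnP _ i0 (fun i => i \notin I) (@nat_of_ord _) i0I.
have below_k (j : T) : j < k -> j \in I.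
  by move=> jk; apply: contraT => /kmin; lia.
have in_I (j : T) : j \in I -> (j < k) || ((k == a :> nat) && (j == a.+1 :> nat)).
  move=> jI; apply: contraT => jk; apply: contraR kI => _.
  by apply: (hI k j) jI; rewrite PleE /Ple_nat; lia.
have [/andP [/eqP ka /existsP [j /andP [jI /eqP ja]]]|noy] :=
  boolP ((k == a :> nat) && [exists j in I, j == a.+1 :> nat]).
  left; apply/setP => i; rewrite !inE; apply/idP/idP => [/in_I|]; first lia.
  case/orP => [ia|/eqP ia]; first by apply: below_k; lia.
  by rewrite (_ : i = j) //; apply: val_inj; rewrite /= ia ja.
right; exists k; first by have := ltn_ord k; lia.
apply/setP => i; rewrite inE; apply/idP/idP => [iI|/below_k //].
case/orP: (in_I i iI) => // /andP [ka ia]; move: noy; rewrite ka /=.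
by move/existsPn/(_ i); rewrite iI ia.
Qed.

Definition upper_initial k : seq nat := if k == a then [:: a; a.+1] else [:: k].
Definition lower_initial k : seq nat :=
  if k == a.+2 then [:: a; a.+1] else if k == 0 then [::] else [:: k.-1].

Lemma Tplus_initial k (p : T) : Tplus le p (initial k) = ((p : nat) \in upper_initial k).
Proof.
rewrite /upper_initial; case: eqP => ka; rewrite !inE.
all: apply/TplusP/idP => [[pk below]|p_up]; last first.
all: try (split=> [|q]; rewrite ?PleE /Ple_nat -?val_eqE inE /=; lia).
all: rewrite inE in pk; apply: contraT => p_up.
all: have k_lt : k < n by have := ltn_ord p; lia.
all: by have := below (Ordinal k_lt); rewrite PleE /Ple_nat -val_eqE inE /=; lia.
Qed.

Lemma Tminus_initial k (p : T) : k <= n ->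
  Tminus le p (initial k) = ((p : nat) \in lower_initial k).
Proof.
move=> kn; rewrite /lower_initial; case: eqP => ka2; [|case: eqP => k0]; rewrite ?in_nil ?inE.
2: by apply/negbTE/negP => /TminusP []; rewrite inE k0.
all: apply/TminusP/idP => [[pk above]|p_low]; last first.
all: try (split=> [|q]; rewrite ?PleE /Ple_nat -?val_eqE inE /=; lia).
all: rewrite inE in pk; apply: contraT => p_low.
all: have [pa|pa] := eqVneq (p : nat) a.
all: try (have q_lt : a.+2 < n by lia).
all: try (have q_lt : p.+1 < n by lia).
all: by have := above (Ordinal q_lt); rewrite PleE /Ple_nat -val_eqE inE /=; lia.
Qed.

Lemma Tplus_ideal_y (p : T) : Tplus le p ideal_y = ((p : nat) \in [:: a]).
Proof.
rewrite !inE; apply/TplusP/idP => [[py below]|pa]; last first.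
  by split=> [|q]; rewrite ?PleE /Ple_nat -?val_eqE inE /=; lia.
rewrite inE in py; apply: contraT => pa.
have a_lt : a < n by have := ltn_ord p; lia.
by have := below (Ordinal a_lt); rewrite PleE /Ple_nat -val_eqE inE /=; lia.
Qed.

Lemma Tminus_ideal_y (p : T) : Tminus le p ideal_y = ((p : nat) \in [:: a.+1]).
Proof.
rewrite !inE; apply/TminusP/idP => [[py above]|pa1]; last first.
  by split=> [|q]; rewrite ?PleE /Ple_nat -?val_eqE inE /=; lia.
rewrite inE in py; apply: contraT => pa1.
have a1_lt : a.+1 < n by have := ltn_ord p; lia.
by have := above (Ordinal a1_lt); rewrite PleE /Ple_nat -val_eqE inE /=; lia.
Qed.

Variable R : realFieldType.
Local Open Scope ring_scope.

Definition weight (i : nat) : R :=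
  if (i < a)%N then -1 else if (i <= a.+1)%N then - 2^-1 else 0.

Lemma toggle_balance (I : {set T}) : is_ideal le I ->
  \sum_(p : T | Tminus le p I) (1 + weight p) = 1 + \sum_(p : T | Tplus le p I) weight p.
Proof.
case/ideal_classification => [->|[k kn ->]].
  rewrite (eq_bigl _ _ Tminus_ideal_y) (eq_bigl _ _ Tplus_ideal_y).
  rewrite (sum_ord_mem _ (fun j => 1 + weight j)) // sum_ord_mem // !big_cons !big_nil /weight.
  by repeat (case: ifP => ?; try (exfalso; lia)); lra.
rewrite (eq_bigl _ _ (fun p => Tminus_initial p kn)) (eq_bigl _ _ (Tplus_initial k)).
rewrite /upper_initial /lower_initial.
repeat (case: ifP => ?; try (exfalso; lia)).
all: rewrite (sum_ord_mem _ (fun j => 1 + weight j)) ?sum_ord_mem /= ?inE ?andbT; try lia.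
all: rewrite ?big_cons ?big_nil /weight.
all: repeat (case: ifP => ?; try (exfalso; lia)).
all: lra.
Qed.

End PosetPa11d.

Local Open Scope ring_scope.

Theorem proposition6p1 (R : realFieldType) (a d : nat) :
  (1 <= a)%N -> (1 <= d)%N ->
  tCDE (@Ple a d) R /\ edge_density (@Ple a d) R = 1.
Proof.
move=> _ _; apply: (@tCDE_toggle_decomposition _ _ _ (fun p : Pelt a d => weight a R p)) => I hI.
exact: (ddeg_toggle_decomposition (@Ple_lt a d) hI (toggle_balance R hI)).
Qed.
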